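(* Let $x\in\mathcal{X}(\mathbb{Z}_S)$ and let $a(x)=a_1(x)+a_2(x)$ be a cocycle $G_T\to U_2$ representing the class of the path torsor $\pi_1^{u,\mathbb{Q}_p}(\bar X;b,x)$. Let $b_x:G_T\to L_1$ be a cochain with $db_x=c\cup a_1(x)$. Then the $Z$-valued 2-cochain $$\phi_x=b_x\cup a_1(x)-2c\cup a_2(x)$$ on $G_T\times G_T$ is a cocycle.
   Context: Setting. $E$ is an elliptic curve over $\mathbb{Q}$ with origin $e$ and $\operatorname{ord}_{s=1}L(E,s)=1$, $X=E\setminus\{e\}$, $\mathcal{E}$ a regular minimal model over $\mathbb{Z}$, $\mathcal{X}$ the complement of the closure of $e$; $p$ an odd prime of good reduction; $S$ a finite set of places containing $\infty$ and the bad primes, $T=S\cup\{p\}$, $G_T$ the Galois group of the maximal extension of $\mathbb{Q}$ unramified outside $T$. $b$ is a nonzero rational tangent vector at $e$ (tangential base point). $U=\pi_1^{u,\mathbb{Q}_p}(\bar X,b)$, $U_2=U^3\backslash U$ (descending central series), $L=\mathrm{Lie}\,U$, $L_2=L/L^3$, $L_1=L/L^2$, $Z=L^2/L^3\cong\mathbb{Q}_p(1)$; the logarithm identifies $U_2$ with $L_2$, and $L_2=L_1\oplus Z$ via the $G$-equivariant splitting $x\mapsto\frac12(x'-I(x'))$, where $I$ is the automorphism induced by $[-1]$ on $E$ and the canonical path from $-b$ to $b$ ($I=-1$ on $L_1$, $I=\mathrm{id}$ on $Z$). Group law: $(l_1+l_2)*(l_1'+l_2')=(l_1+l_1')+(l_2+l_2'+\frac12[l_1,l_1'])$.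 A cocycle $a=a_1+a_2$ into $U_2$ means $a_1$ is an $L_1$-valued cocycle and $da_2=-\frac12 a_1\cup a_1$. Cup products: for $L_1$-valued 1-cochains, $(c\cup c')(g,h)=[c(g),gc'(h)]$; for a $\mathbb{Q}_p$-valued 1-cochain $c$ and a vector-valued cochain $a$, $(c\cup a)(g,h)=c(g)\,ga(h)$. $c=\log\chi:G_T\to\mathbb{Q}_p$, with $\chi$ the $p$-adic cyclotomic character. *)

From HB Require Import structures.
From mathcomp Require Import all_boot all_algebra.
Set Implicit Arguments. Unset Strict Implicit. Unset Printing Implicit Defensive.
Import GRing.Theory.
Local Open Scope ring_scope.

Definition group_axioms (G : Type) (mul : G -> G -> G) (one : G) (inv : G -> G) :=
  [/\ associative mul, left_id one mul, right_id one mul,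
      (forall g, mul (inv g) g = one) & (forall g, mul g (inv g) = one)].

Definition linear_action (K : fieldType) (V : lmodType K) (G : Type)
  (mul : G -> G -> G) (one : G) (act : G -> V -> V) :=
  [/\ (forall g (a : K) (u v : V), act g (a *: u + v) = a *: act g u + act g v),
      (forall v, act one v = v)
    & (forall g h v, act (mul g h) v = act g (act h v))].

(* The Lie bracket L1 x L1 -> Z = L^2/L^3: K-bilinear and alternating. *)
Definition lie_bracket (K : fieldType) (L1 Z : lmodType K) (br : L1 -> L1 -> Z) :=
  [/\ (forall (a : K) x y z, br (a *: x + y) z = a *: br x z + br y z),
      (forall (a : K) x y z, br z (a *: x + y) = a *: br z x + br z y)
    & (forall x, br x x = 0)].

Definition equivariant_bracket (K : fieldType) (L1 Z : lmodType K) (G : Type)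
  (act1 : G -> L1 -> L1) (actZ : G -> Z -> Z) (br : L1 -> L1 -> Z) :=
  forall g x y, actZ g (br x y) = br (act1 g x) (act1 g y).

(* A homomorphism G -> (K,+) (e.g. c = log chi; G acts trivially on K). *)
Definition additive_character (K : fieldType) (G : Type) (mul : G -> G -> G)
  (c : G -> K) := forall g h, c (mul g h) = c g + c h.

Definition d1 (K : fieldType) (V : lmodType K) (G : Type) (mul : G -> G -> G)
  (act : G -> V -> V) (f : G -> V) : G -> G -> V :=
  fun g h => act g (f h) - f (mul g h) + f g.

Definition d2 (K : fieldType) (V : lmodType K) (G : Type) (mul : G -> G -> G)
  (act : G -> V -> V) (phi : G -> G -> V) : G -> G -> G -> V :=
  fun g h k => act g (phi h k) - phi (mul g h) k + phi g (mul h k) - phi g h.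

Definition cup_br (K : fieldType) (L1 Z : lmodType K) (G : Type)
  (act1 : G -> L1 -> L1) (br : L1 -> L1 -> Z) (a a' : G -> L1) : G -> G -> Z :=
  fun g h => br (a g) (act1 g (a' h)).

Definition cup_sc (K : fieldType) (V : lmodType K) (G : Type)
  (act : G -> V -> V) (c : G -> K) (a : G -> V) : G -> G -> V :=
  fun g h => c g *: act g (a h).

From HB Require Import structures.
From mathcomp Require Import all_boot all_algebra.
Import GRing.Theory.
Local Open Scope ring_scope.
Set Implicit Arguments. Unset Strict Implicit.

(* The cup product satisfies the Leibniz rule
   d(x ∪ y) = dx ∪ y - x ∪ dy on 1-cochains, both for the bracket pairing
   L1 x L1 -> Z and for the scalar pairing K x V -> V, and dc = 0 for the
   homomorphism c.  Hence d(b_x ∪ a_1) = (c ∪ a_1) ∪ a_1 and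
   d(c ∪ a_2) = -c ∪ da_2 = 1/2 c ∪ (a_1 ∪ a_1); by equivariance both
   3-cochains equal (g,h,k) |-> c(g) [g a_1(h), gh a_1(k)], so the two
   contributions to dφ_x cancel. *)

Section LinearHypothesis.
Variables (K : fieldType) (U V : lmodType K) (f : U -> V).
Hypothesis f_lin : forall (a : K) (u v : U), f (a *: u + v) = a *: f u + f v.

Let fL : {linear U -> V} := HB.pack f (GRing.isLinear.Build K U V *:%R f f_lin).

Lemma lin0 : f 0 = 0. Proof. exact: (linear0 fL). Qed.
Lemma linD u v : f (u + v) = f u + f v. Proof. exact: (linearD fL). Qed.
Lemma linB u v : f (u - v) = f u - f v. Proof. exact: (linearB fL). Qed.
Lemma linZ a u : f (a *: u) = a *: f u. Proof. exact: (linearZ_LR fL). Qed.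

End LinearHypothesis.

Section LieBracket.
Variables (K : fieldType) (L1 Z : lmodType K) (br : L1 -> L1 -> Z).
Hypothesis hbr : lie_bracket br.

Lemma lie_bracket_linl z (a : K) x y : br (a *: x + y) z = a *: br x z + br y z.
Proof. by case: hbr. Qed.

Lemma lie_bracket_linr z (a : K) x y : br z (a *: x + y) = a *: br z x + br z y.
Proof. by case: hbr. Qed.

End LieBracket.

Lemma subrACA (V : zmodType) (x1 y1 x2 y2 : V) :
  (x1 - y1) - (x2 - y2) = (x1 - x2) - (y1 - y2).
Proof. by rewrite !opprD !opprK addrACA. Qed.

Section Cochains.
Variables (K : fieldType) (G : Type) (mul : G -> G -> G).

Section Coboundary.
Variables (V : lmodType K) (act : G -> V -> V).
Hypothesis act_lin : forall g (a : K) (u v : V), act g (a *: u + v) = a *: act g u + act g v.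
Hypothesis act_mul : forall g h v, act (mul g h) v = act g (act h v).

Lemma d2B (phi psi : G -> G -> V) (a : K) g h k :
  d2 mul act (fun g h => phi g h - a *: psi g h) g h k
  = d2 mul act phi g h k - a *: d2 mul act psi g h k.
Proof.
rewrite /d2 (linB (act_lin g)) (linZ (act_lin g)) !scalerBr scalerDr scalerBr.
by rewrite subrACA addrACA -opprD subrACA.
Qed.

Lemma d2_cup_sc (c : G -> K) (x : G -> V) g h k :
  additive_character mul c ->
  d2 mul act (cup_sc act c x) g h k = - c g *: act g (d1 mul act x h k).
Proof.
move=> hc; rewrite /d2 /cup_sc /d1 hc act_mul (linZ (act_lin g)).
rewrite (linD (act_lin g)) (linB (act_lin g)) scalerDl opprD addrCA subrr addr0.
by rewrite scaleNr scalerDr scalerBr opprD opprB [- _ + _]addrC.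
Qed.

End Coboundary.

Section BracketCup.
Variables (L1 Z : lmodType K) (act1 : G -> L1 -> L1) (actZ : G -> Z -> Z).
Variable br : L1 -> L1 -> Z.
Hypothesis act1_lin : forall g (a : K) (u v : L1),
  act1 g (a *: u + v) = a *: act1 g u + act1 g v.
Hypothesis act1_mul : forall g h v, act1 (mul g h) v = act1 g (act1 h v).
Hypothesis hbr : lie_bracket br.
Hypothesis heq : equivariant_bracket act1 actZ br.

Let br_linl := lie_bracket_linl hbr.
Let br_linr := lie_bracket_linr hbr.

Lemma d2_cup_br (x y : G -> L1) g h k :
  d2 mul actZ (cup_br act1 br x y) g h k
  = br (d1 mul act1 x g h) (act1 (mul g h) (y k))
    - br (x g) (act1 g (d1 mul act1 y h k)).
Proof.
rewrite /d2 /cup_br /d1 heq -!act1_mul (linD (br_linl _)) (linB (br_linl _)).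
rewrite (linD (act1_lin g)) (linB (act1_lin g)) -act1_mul.
rewrite (linD (br_linr _)) (linB (br_linr _)) opprD opprB !addrA.
by rewrite (addrAC _ (br (x g) (act1 g (y (mul h k))))) addrK.
Qed.

End BracketCup.

End Cochains.

Theorem lemma2p1
  (K : fieldType) (two_neq0 : (2 : K) != 0)
  (L1 Z : lmodType K)
  (G : Type) (mul : G -> G -> G) (one : G) (inv : G -> G)
  (hG : group_axioms mul one inv)
  (act1 : G -> L1 -> L1) (actZ : G -> Z -> Z)
  (hact1 : linear_action mul one act1) (hactZ : linear_action mul one actZ)
  (br : L1 -> L1 -> Z) (hbr : lie_bracket br)
  (heq : equivariant_bracket act1 actZ br)
  (c : G -> K) (hc : additive_character mul c)
  (a1 : G -> L1) (a2 : G -> Z)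
  (ha1 : forall g h, d1 mul act1 a1 g h = 0)
  (ha2 : forall g h, d1 mul actZ a2 g h = - (2 : K)^-1 *: cup_br act1 br a1 a1 g h)
  (b : G -> L1)
  (hb : forall g h, d1 mul act1 b g h = cup_sc act1 c a1 g h) :
  forall g h k,
    d2 mul actZ
       (fun g h => cup_br act1 br b a1 g h - (2 : K) *: cup_sc actZ c a2 g h)
       g h k = 0.
Proof.
move=> g h k; case: hact1 => act1_lin _ act1_mul; case: hactZ => actZ_lin _ actZ_mul.
rewrite d2B // d2_cup_br // d2_cup_sc // hb ha1 ha2 (lin0 (act1_lin g)).
rewrite /cup_sc /cup_br (lin0 (lie_bracket_linr hbr _)) (linZ (lie_bracket_linl hbr _)).
rewrite (linZ (actZ_lin g)) heq act1_mul subr0 !scalerA.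
by rewrite !mulrN mulNr opprK mulrAC divff // mul1r subrr.
Qed.
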